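(* Let $n\ge 2$, let $\mathbb{F}_q$ be a finite field with $q$ elements, and let $V$ be an $n$-dimensional vector space over $\mathbb{F}_q$. Let $\mathcal{F}$ be the set of complete flags $V_*=(V_0\subset V_1\subset\dots\subset V_n)$ in $V$ with $\dim V_k=k$ for $k\in[0,n]$. Let $\mathcal{H}$ be the $\mathbb{C}$-vector space of functions $\mathcal{F}\times\mathcal{F}\to\mathbb{C}$ constant on the orbits of the diagonal action of $GL(V)$, with multiplication $(f*f')(W_*,V_* )=\sum_{V'_*\in\mathcal{F}}f(W_*,V'_* )f'(V'_*,V_* )$. Define $f_1\in\mathcal{H}$ by: $f_1(W_*,V'_* )=1$ if there exists $g\in[1,n]$ with $W_r=V'_r$ for $r\in[1,g-1]$ and $V'_r\ne W_r\subset V'_{r+1}$ for $r\in[g,n-1]$; and $f_1(W_*,V'_* )=0$ otherwise. For $t\in[0,n]$ let $X_t\subset\mathcal{F}\times\mathcal{F}$ be the set of pairs $(V'_*,V_* )$ for which there exists a sequence $1\le i_1<i_2<\dots<i_{n-t}\le n$ with $V'_r\subset V_{i_r}$ and $V'_r\not\subset V_{i_r-1}$ for all $r\in[1,n-t]$, and let $f_t\in\mathcal{H}$ be the indicator function of $X_t$ (for $t=1$ this coincides with $f_1$ above). Then for every $t\in[1,n-1]$, $$f_1*f_t=(1+q+q^2+\dots+q^{t-1})f_t+q^tf_{t+1}.$$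
   Context: For integers $a,b$, $[a,b]$ denotes the set of integers $c$ with $a\le c\le b$. $GL(V)$ acts on $\mathcal{F}$ by $gV_*=(gV_0\subset gV_1\subset\dots\subset gV_n)$ and on $\mathcal{F}\times\mathcal{F}$ diagonally. *)

From HB Require Import structures.
From mathcomp Require Import all_boot all_order all_algebra all_field.
Set Implicit Arguments. Unset Strict Implicit. Unset Printing Implicit Defensive.
Import Order.TTheory GRing.Theory Num.Theory.
Local Open Scope ring_scope.

(* V = 'rV[F]_n ; a subspace is represented by its canonical matrix <<A>>%MS,
   so that distinct matrices represent distinct subspaces. *)

Definition is_flagb (F : fieldType) (n : nat)
  (Vs : {ffun 'I_n.+1 -> 'M[F]_n}) : bool :=
  [forall k : 'I_n.+1, (Vs k == <<Vs k>>%MS) && (\rank (Vs k) == k)] &&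
  [forall i : 'I_n.+1, forall j : 'I_n.+1, (i <= j)%N ==> (Vs i <= Vs j)%MS].

Definition flag (F : finFieldType) (n : nat) :=
  {Vs : {ffun 'I_n.+1 -> 'M[F]_n} | is_flagb Vs}.

Definition fsub (F : finFieldType) (n : nat) (Vs : flag F n) (k : nat) : 'M[F]_n :=
  val Vs (inord k).

Definition f1b (F : finFieldType) (n : nat) (W V' : flag F n) : bool :=
  [exists g : 'I_n.+1, (1 <= g)%N &&
    [forall r : 'I_n.+1,
      (((1 <= r) && (r <= g - 1))%N ==> (fsub W r == fsub V' r)%MS) &&
      (((g <= r) && (r <= n - 1))%N ==>
         (~~ (fsub V' r == fsub W r)%MS && (fsub W r <= fsub V' r.+1)%MS))]].

(* membership of (V', V) in X_t ; the sequence i_1 < ... < i_{n-t} is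
   encoded by i : 'I_n.+1 -> 'I_n.+1, only indices r in [1, n-t] matter. *)
Definition Xb (F : finFieldType) (n t : nat) (V' V : flag F n) : bool :=
  [exists i : {ffun 'I_n.+1 -> 'I_n.+1},
    [forall r : 'I_n.+1,
      ((1 <= r) && (r <= n - t))%N ==>
        [&& (1 <= i r)%N,
            ((r < n - t)%N ==> (i r < i (inord r.+1))%N),
            (fsub V' r <= fsub V (i r))%MS &
            ~~ (fsub V' r <= fsub V (i r).-1)%MS]]].

Definition ind (F : finFieldType) (n : nat) (P : flag F n -> flag F n -> bool)
  : flag F n -> flag F n -> algC :=
  fun W V => if P W V then 1 else 0.

Definition f1 (F : finFieldType) (n : nat) := ind (@f1b F n).
Definition ft (F : finFieldType) (n t : nat) := ind (@Xb F n t).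

Definition hconv (F : finFieldType) (n : nat) (f f' : flag F n -> flag F n -> algC)
  (W V : flag F n) : algC :=
  \sum_(V' : flag F n) f W V' * f' V' V.

From HB Require Import structures.
From mathcomp Require Import all_boot all_order all_algebra all_field.
From mathcomp Require Import mxabelem zify.
Import Order.TTheory GRing.Theory Num.Theory.
Local Open Scope ring_scope.
Set Implicit Arguments. Unset Strict Implicit. Unset Printing Implicit Defensive.

(* Fix [W] and [V], and let [H = W_{n-1}].  A flag [Y] with [f_1(W, Y) = 1]
   and index [g] is obtained from [W] by inserting a vector [v] outside [H]:
   [Y_k = W_k] for [k < g] and [Y_k = W_{k-1} + v] for [k >= g]; exactly
   [q^g - q^{g-1}] vectors [v] give the same [Y].  Whether [(Y, V)] lies in
   [X_t] only depends on the levels [level V Y_r] (least [i] with [Y_r <= V_i]),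
   which must increase strictly for [r] in [[1, n-t]], and the level of
   [W_{r-1} + v] is the larger of the levels of [W_{r-1}] and [v].  For
   [g > n-t] the vector [v] is irrelevant and [g] contributes [q^{n-g}] when
   [(W, V)] lies in [X_t].  For [g <= n-t] the level of [v] must lie strictly
   between the levels of [W_{g-1}] and [W_g]; counting the vectors outside [H]
   by level, these contributions telescope to [q^t] when [(W, V)] lies in
   [X_{t+1}]. *)

Section MxRank.
Variable F : fieldType.

Lemma sub_rank_eqmx m1 m2 n (A : 'M[F]_(m1, n)) (B : 'M[F]_(m2, n)) :
  (A <= B)%MS -> (\rank B <= \rank A)%N -> (A == B)%MS.
Proof. by move=> sAB rBA; rewrite -(mxrank_leqif_eq sAB).2 eqn_leq rBA mxrankS. Qed.

Lemma mxrank_ltn_adds m1 m2 n (A : 'M[F]_(m1, n)) (B : 'M[F]_(m2, n)) :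
  ~~ (B <= A)%MS -> (\rank A < \rank (A + B)%MS)%N.
Proof.
by move=> nsBA; rewrite (ltn_leqif (mxrank_leqif_sup (addsmxSl A B))) addsmx_sub submx_refl.
Qed.

Lemma mxrank_adds_notsub m n (A : 'M[F]_(m, n)) (v : 'rV[F]_n) :
  ~~ (v <= A)%MS -> \rank (A + v)%MS = (\rank A).+1.
Proof.
move=> vA; apply/eqP; rewrite eqn_leq mxrank_ltn_adds // andbT.
apply: leq_trans (mxrank_adds_leqif A v).1 _.
by rewrite -[X in (_ <= X)%N]addn1 leq_add2l rank_leq_row.
Qed.

End MxRank.

Section Flags.
Variables (F : finFieldType) (n : nat).
Implicit Types (X Y : flag F n).

Lemma fsub_genmx X k : fsub X k = <<fsub X k>>%MS.
Proof.
by rewrite /fsub; case: X => Vs /= /andP[/forallP /(_ (inord k)) /andP[/eqP]].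
Qed.

Lemma mxrank_fsub X k : (k <= n)%N -> \rank (fsub X k) = k.
Proof.
move=> kn; rewrite /fsub; case: X => Vs /= /andP[/forallP /(_ (inord k))].
by case/andP => _ /eqP ->; rewrite inordK.
Qed.

Lemma fsubS X i j : (i <= j)%N -> (j <= n)%N -> (fsub X i <= fsub X j)%MS.
Proof.
move=> ij jn; rewrite /fsub; case: X => Vs /= /andP[_ /forallP Vmono].
by move/forallP/(_ (inord j))/implyP: (Vmono (inord i)); apply; rewrite !inordK //; lia.
Qed.

Lemma fsub0 X : fsub X 0 = 0.
Proof. by apply/eqP; rewrite -mxrank_eq0 mxrank_fsub. Qed.

Lemma fsubn_full X : (1%:M <= fsub X n)%MS.
Proof. by apply: submx_full; rewrite /row_full mxrank_fsub. Qed.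

Lemma fsub_eq0 X k : (k <= n)%N -> (fsub X k == 0) = (k == 0%N).
Proof. by move=> kn; rewrite -mxrank_eq0 mxrank_fsub. Qed.

Lemma eqmx_fsub X Y i j : (fsub X i == fsub Y j)%MS -> fsub X i = fsub Y j.
Proof. by move/genmxP; rewrite -!fsub_genmx. Qed.

Lemma level_exists X m (U : 'M[F]_(m, n)) :
  exists i, (i <= n)%N && (U <= fsub X i)%MS.
Proof. by exists n; rewrite leqnn (submx_trans (submx1 U)) ?fsubn_full. Qed.

Definition level X m (U : 'M[F]_(m, n)) : nat := ex_minn (level_exists X U).

Lemma level_le X m (U : 'M[F]_(m, n)) : (level X U <= n)%N.
Proof. by rewrite /level; case: ex_minnP => i /andP[]. Qed.

Lemma sub_level X m (U : 'M[F]_(m, n)) : (U <= fsub X (level X U))%MS.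
Proof. by rewrite /level; case: ex_minnP => i /andP[]. Qed.

Lemma sub_fsubE X m (U : 'M[F]_(m, n)) k :
  (k <= n)%N -> (U <= fsub X k)%MS = (level X U <= k)%N.
Proof.
move=> kn; apply/idP/idP => [sUk | lek].
  by rewrite /level; case: ex_minnP => i _; apply; rewrite kn.
exact: submx_trans (sub_level X U) (fsubS X lek kn).
Qed.

Lemma level_adds X m1 m2 (U1 : 'M[F]_(m1, n)) (U2 : 'M[F]_(m2, n)) :
  level X (U1 + U2)%MS = maxn (level X U1) (level X U2).
Proof.
have le_max : (maxn (level X U1) (level X U2) <= n)%N by rewrite geq_max !level_le.
apply/eqP; rewrite eqn_leq -sub_fsubE // addsmx_sub !sub_fsubE ?leq_maxl ?leq_maxr //.
rewrite geq_max -!(sub_fsubE _ _ (level_le X (U1 + U2)%MS)).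
by rewrite !(submx_trans _ (sub_level X _)) ?addsmxSl ?addsmxSr.
Qed.

Lemma level_genmx X m (U : 'M[F]_(m, n)) : level X <<U>>%MS = level X U.
Proof.
apply/eqP; rewrite eqn_leq -sub_fsubE ?level_le // genmxE sub_level /=.
by rewrite -sub_fsubE ?level_le // -genmxE sub_level.
Qed.

Lemma level_gt0 X m (U : 'M[F]_(m, n)) : (0 < level X U)%N = (U != 0).
Proof. by rewrite ltnNge -sub_fsubE // fsub0 submx0. Qed.

Lemma level_fsub_gt0 X Y r : (0 < r <= n)%N -> (0 < level X (fsub Y r))%N.
Proof. by case/andP=> r0 rn; rewrite level_gt0 fsub_eq0 // -lt0n. Qed.

Lemma level_fsub0 X Y : level X (fsub Y 0) = 0%N.
Proof. by apply/eqP; rewrite -leqn0 -sub_fsubE // !fsub0 sub0mx. Qed.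

Lemma level_fsub_mono X Y i j : (i <= j)%N -> (j <= n)%N ->
  (level X (fsub Y i) <= level X (fsub Y j))%N.
Proof.
by move=> ij jn; rewrite -sub_fsubE ?level_le // (submx_trans (fsubS Y ij jn)) ?sub_level.
Qed.

End Flags.

Definition strictly_incr (m : nat) (f : nat -> nat) : bool :=
  [forall r : 'I_m, (0 < r)%N ==> (f r < f r.+1)%N].

Lemma strictly_incrP m f :
  reflect (forall r, (0 < r)%N -> (r < m)%N -> (f r < f r.+1)%N) (strictly_incr m f).
Proof.
apply: (iffP forallP) => [incr r r0 rm | incr r].
  by have /implyP := incr (Ordinal rm); apply.
by apply/implyP => r0; apply: incr.
Qed.

Lemma eq_strictly_incr m f f' :
  (forall r, (r <= m)%N -> f r = f' r) -> strictly_incr m f = strictly_incr m f'.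
Proof.
move=> eq_f; apply/strictly_incrP/strictly_incrP => incr r r0 rm;
  by have := incr r r0 rm; rewrite !eq_f //; lia.
Qed.

Definition ins_seq (P : nat -> nat) (g a r : nat) : nat :=
  if (r < g)%N then P r else maxn (P r.-1) a.

Lemma strictly_incr_ins_seq_late P g a m :
  (m < g)%N -> strictly_incr m (ins_seq P g a) = strictly_incr m P.
Proof. by move=> mg; apply: eq_strictly_incr => r rm; rewrite /ins_seq ifT //; lia. Qed.

Lemma strictly_incr_ins_seq P g a m N :
    (forall i j, (i <= j)%N -> (j <= N)%N -> (P i <= P j)%N) -> P 0 = 0%N ->
    (0 < a)%N -> (0 < g <= m)%N -> (m <= N)%N ->
  strictly_incr m (ins_seq P g a) =
  [&& strictly_incr m.-1 P, (P g.-1 < a)%N & (g < m)%N ==> (a < P g)%N].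
Proof.
move=> Pmono P0 a0; case: g => // g' /= gm mN; case: m gm mN => // m' gm mN.
have E1 r : (r < g'.+1)%N -> ins_seq P g'.+1 a r = P r by rewrite /ins_seq => ->.
have E2 r : (g'.+1 <= r)%N -> ins_seq P g'.+1 a r = maxn (P r.-1) a.
  by move=> gr; rewrite /ins_seq ltnNge gr.
apply/strictly_incrP/and3P => [incr | [/strictly_incrP incrP /= Pa /implyP aP] r r0 rm].
  split.
  - apply/strictly_incrP => r r0 rm /=; case: (ltnP r.+1 g'.+1) => gr.
      by have := incr r r0 ltac:(lia); rewrite !E1 //; lia.
    by have := incr r.+1 ltac:(lia) ltac:(lia); rewrite !E2 //=; lia.
  - case: g' E1 E2 gm {incr} (incr) => [|g''] E1 E2 gm incr /=; first by rewrite P0.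
    by have := incr g''.+1 isT ltac:(lia); rewrite E1 // E2 //=; lia.
  - apply/implyP => gm'.
    by have := incr g'.+1 ltac:(lia) ltac:(lia); rewrite !E2 //=; lia.
case: (ltnP r.+1 g'.+1) => r1g.
  by rewrite !E1; try lia; apply: incrP; lia.
case: (ltnP r g'.+1) => rg.
  have -> : r = g' by lia.
  by rewrite E1 // E2 //=; lia.
have aPr : (a < P r)%N by apply: leq_trans (aP _) (Pmono _ _ _ _); lia.
have Pr : (P r.-1 < P r)%N.
  case: r rg aPr rm {r1g r0} => [|[|r]] //= _ aPr rm; first by rewrite P0; lia.
  by apply: incrP; lia.
by rewrite !E2 //=; lia.
Qed.

(* The sequence [i_1 < ... < i_{n-t}] witnessing [(X, Y) \in X_t] is forced:
   [i_r] is the level of [X_r] in [Y]. *)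
Lemma XbE (F : finFieldType) n t (X Y : flag F n) :
  Xb t X Y = strictly_incr (n - t) (fun r => level Y (fsub X r)).
Proof.
have lev_lt k : (level Y (fsub X k) < n.+1)%N by rewrite ltnS level_le.
apply/existsP/strictly_incrP => [[i /forallP Xi] | incr].
  have level_i r : (0 < r <= n - t)%N -> level Y (fsub X r) = i (inord r).
    move=> rnt; have rn : (r < n.+1)%N by lia.
    have /implyP := Xi (inord r); rewrite inordK // => /(_ rnt) /and4P[i0 _ sXi nsXi].
    have i1n : ((i (inord r)).-1 <= n)%N by have := leq_ord (i (inord r)); lia.
    rewrite (sub_fsubE _ _ i1n) -ltnNge in nsXi.
    apply/eqP; rewrite eqn_leq -sub_fsubE ?leq_ord // sXi /=.
    by move: i0 nsXi; case: (nat_of_ord _).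
  move=> r r0 rnt; rewrite !level_i; try lia.
  have /implyP := Xi (inord r); rewrite inordK; last lia.
  by rewrite r0 (ltnW rnt) => /(_ isT) /and4P[_ /implyP/(_ rnt) lt_i _ _].
exists [ffun r : 'I_n.+1 => inord (level Y (fsub X r))].
apply/forallP => r; apply/implyP => /andP[r0 rnt]; rewrite !ffunE.
have lev_gt0 := @level_fsub_gt0 F n Y X r ltac:(lia).
rewrite inordK // lev_gt0 sub_level /=; apply/andP; split.
  apply/implyP => r_lt; have r1n : (r.+1 < n.+1)%N by lia.
  by rewrite (inordK r1n) inordK //; apply: incr.
have lev1 : ((level Y (fsub X r)).-1 <= n)%N by have := level_le Y (fsub X r); lia.
by rewrite (sub_fsubE _ _ lev1) -ltnNge; lia.
Qed.

Section Insertion.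
Variables (F : finFieldType) (n : nat) (W : flag F n).
Local Notation H := (fsub W n.-1).

Definition ins_fun (g : nat) (v : 'rV[F]_n) : {ffun 'I_n.+1 -> 'M[F]_n} :=
  [ffun k : 'I_n.+1 => if (k < g)%N then fsub W k else <<(fsub W k.-1 + v)%MS>>%MS].

(* The junk value [W] is returned unless [ins_fun g v] is a flag, which it is
   when [0 < g <= n] and [v] is outside [H] ([is_flag_ins]). *)
Definition flag_ins g v : flag F n := insubd W (ins_fun g v).

Lemma is_flag_ins g v : (0 < g <= n)%N -> ~~ (v <= H)%MS -> is_flagb (ins_fun g v).
Proof.
move=> /andP[g0 gn] vH.
have vWk k : (k <= n.-1)%N -> ~~ (v <= fsub W k)%MS.
  by move=> kn; apply: contra vH => /submx_trans; apply; apply: fsubS; lia.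
apply/andP; split; apply/forallP => k; rewrite ?ffunE.
  case: ifP => kg; first by rewrite -fsub_genmx eqxx mxrank_fsub ?eqxx // -ltnS.
  have k0 : (0 < k)%N by move/negbT: kg; rewrite -leqNgt; lia.
  have := ltn_ord k => kn.
  rewrite genmx_id eqxx /= genmxE mxrank_adds_notsub ?vWk ?mxrank_fsub ?prednK //;
    rewrite -?subn1; lia.
apply/forallP => j; apply/implyP => kj; rewrite !ffunE.
have jn := leq_ord j.
case: ifP => kg; case: ifP => jg.
- exact: fsubS.
- by rewrite genmxE (submx_trans _ (addsmxSl _ _)) // fsubS //; lia.
- lia.
- by rewrite !genmxE addsmxS // fsubS //; lia.
Qed.

Lemma fsub_ins g v k : (0 < g <= n)%N -> ~~ (v <= H)%MS -> (k <= n)%N ->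
  fsub (flag_ins g v) k = if (k < g)%N then fsub W k else <<(fsub W k.-1 + v)%MS>>%MS.
Proof. by move=> g_n vH kn; rewrite /fsub /flag_ins val_insubd is_flag_ins // ffunE inordK. Qed.

Definition f1_at (g : nat) (Y : flag F n) : bool :=
  [forall r : 'I_n.+1,
    (((1 <= r) && (r <= g - 1))%N ==> (fsub W r == fsub Y r)%MS) &&
    (((g <= r) && (r <= n - 1))%N ==>
       (~~ (fsub Y r == fsub W r)%MS && (fsub W r <= fsub Y r.+1)%MS))].

Lemma f1bE Y : f1b W Y = [exists g : 'I_n.+1, (1 <= g)%N && f1_at g Y].
Proof. by []. Qed.

Lemma f1_at_low g Y k : (g <= n)%N -> f1_at g Y -> (k < g)%N -> fsub Y k = fsub W k.
Proof.
move=> gn /forallP fY; case: k => [|k] kg; first by rewrite !fsub0.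
have /andP[/implyP low _] := fY (inord k.+1); rewrite inordK in low; last lia.
by apply/esym/eqmx_fsub/low; apply/andP; split=> //; lia.
Qed.

Lemma f1_at_high g Y r : f1_at g Y -> (g <= r)%N -> (r <= n - 1)%N ->
  ~~ (fsub Y r == fsub W r)%MS && (fsub W r <= fsub Y r.+1)%MS.
Proof.
move=> /forallP fY gr rn; have /andP[_ /implyP high] := fY (inord r).
by rewrite inordK in high; [apply: high; rewrite gr | lia].
Qed.

Lemma f1_at_unique g g' Y : (g <= n)%N -> (g' <= n)%N ->
  f1_at g Y -> f1_at g' Y -> g = g'.
Proof.
wlog lt_gg' : g g' / (g < g')%N.
  move=> wl gn g'n fY fY'; case: (ltngtP g g') => // lt.
    exact: wl.
  exact/esym/wl.
move=> gn g'n fY fY'; have /andP[+ _] := f1_at_high fY (leqnn g) ltac:(lia).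
by rewrite (f1_at_low g'n fY' lt_gg') submx_refl.
Qed.

Lemma f1_at_ins g v : (0 < g <= n)%N -> ~~ (v <= H)%MS -> f1_at g (flag_ins g v).
Proof.
move=> g_n vH; apply/forallP => r; have rn := leq_ord r.
apply/andP; split; apply/implyP => /andP[r1 r2]; rewrite !fsub_ins //; try lia.
  by rewrite ifT ?submx_refl //; lia.
have -> : (r < g)%N = false by lia.
have -> : (r.+1 < g)%N = false by lia.
rewrite /= !genmxE addsmxSl andbT negb_and addsmx_sub negb_and -orbA.
by apply/orP; right; apply/orP; left; apply: contra vH => /submx_trans; apply; apply: fsubS; lia.
Qed.

Lemma f1_at_fsub_ge g Y k : (0 < g <= n)%N -> f1_at g Y -> (g <= k <= n)%N ->
  (fsub Y k == fsub W k.-1 + fsub Y g)%MS.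
Proof.
move=> g_n fY /andP[gk]; have sWY : (fsub W g.-1 <= fsub Y g)%MS.
  rewrite -(f1_at_low (k := g.-1) _ fY); [apply: fsubS | |]; lia.
rewrite -(subnKC gk); elim: (k - g)%N => [|d IH] kn.
  by rewrite addn0 addsmxSr addsmx_sub sWY submx_refl.
have {}IH := IH ltac:(lia); rewrite addnS.
set k' := (g + d)%N in IH kn *.
have /andP[neq_YW sWY'] := f1_at_high fY (leq_addr d g) ltac:(lia).
have sWYk' : (fsub W k' + fsub Y g <= fsub Y k'.+1)%MS.
  by rewrite addsmx_sub sWY' fsubS //; lia.
have nsYW : ~~ (fsub Y k' <= fsub W k')%MS.
  by apply: contra neq_YW => /sub_rank_eqmx; apply; rewrite !mxrank_fsub //; lia.
have sWY_WYg : (fsub W k' + fsub Y k' <= fsub W k' + fsub Y g)%MS.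
  rewrite addsmx_sub addsmxSl (submx_trans (proj1 (andP IH))) //.
  by rewrite addsmxS // fsubS //; lia.
have rk_WY := mxrank_ltn_adds nsYW; rewrite mxrank_fsub in rk_WY; last lia.
rewrite andbC; apply: sub_rank_eqmx sWYk' _.
by rewrite mxrank_fsub; [apply: leq_trans rk_WY (mxrankS sWY_WYg) | lia].
Qed.

Lemma flag_ins_f1_at g Y v : (0 < g <= n)%N -> f1_at g Y ->
  (v <= fsub Y g)%MS -> ~~ (v <= fsub W g.-1)%MS ->
  ~~ (v <= H)%MS /\ flag_ins g v = Y.
Proof.
move=> g_n fY sYv nsWv; have gn : (g <= n)%N by lia.
have sWY : (fsub W g.-1 <= fsub Y g)%MS.
  by have /andP[_] := f1_at_fsub_ge (k := g) g_n fY ltac:(lia); rewrite addsmx_sub => /andP[].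
have eq_Yg : (fsub W g.-1 + v == fsub Y g)%MS.
  apply: sub_rank_eqmx; first by rewrite addsmx_sub sWY sYv.
  by rewrite mxrank_adds_notsub // !mxrank_fsub //; lia.
have eq_Yk k : (g <= k <= n)%N -> (fsub Y k == fsub W k.-1 + v)%MS.
  move=> g_k; have /andP[sYk sk] := f1_at_fsub_ge g_n fY g_k.
  move/andP: eq_Yg => [s1 s2].
  have sW : (fsub W g.-1 <= fsub W k.-1)%MS by apply: fsubS; lia.
  apply/andP; split.
    apply: submx_trans sYk _; rewrite addsmx_sub addsmxSl /=.
    by apply: submx_trans s2 _; apply: addsmxS sW (submx_refl v).
  rewrite addsmx_sub; apply/andP; split; apply: submx_trans sk.
    exact: addsmxSl.
  exact: submx_trans sYv (addsmxSr _ _).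
have vH : ~~ (v <= H)%MS.
  apply/negP => vH; have /andP[sYn _] := eq_Yk n ltac:(lia).
  have sYnH : (fsub Y n <= H)%MS.
    by apply: submx_trans sYn _; rewrite addsmx_sub vH andbT fsubS ?leq_pred.
  by have := mxrankS sYnH; rewrite !mxrank_fsub ?leq_pred //; lia.
split=> //; apply/val_inj/ffunP => k.
have val_fsub (X : flag F n) : val X k = fsub X k by rewrite /fsub inord_val.
rewrite !val_fsub fsub_ins ?leq_ord //; case: ifP => kg.
  by rewrite (f1_at_low gn fY kg).
rewrite [RHS]fsub_genmx; apply/genmxP; rewrite andbC; apply: eq_Yk.
by rewrite leqNgt kg leq_ord.
Qed.

Lemma flag_insP g Y v : (0 < g <= n)%N -> f1_at g Y ->
  (~~ (v <= H)%MS && (flag_ins g v == Y)) =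
  ((v <= fsub Y g)%MS && ~~ (v <= fsub W g.-1)%MS).
Proof.
move=> g_n fY; apply/andP/andP => [[vH /eqP <-] | [sYv nsWv]].
  rewrite fsub_ins ?ltnn ?genmxE ?addsmxSr //; try lia; split=> //.
  by apply: contra vH => /submx_trans; apply; apply: fsubS; lia.
by have [vH ->] := flag_ins_f1_at g_n fY sYv nsWv.
Qed.

End Insertion.

Section VectorCounting.
Variables (F : finFieldType) (n : nat).
Local Notation q := #|F|.

Lemma card_rowgD m1 m2 (A : 'M[F]_(m1, n)) (B : 'M[F]_(m2, n)) :
  (A <= B)%MS -> #|rowg B :\: rowg A| = (q ^ \rank B - q ^ \rank A)%N.
Proof. by move=> sAB; rewrite cardsD (setIidPr _) ?rowgS // !card_rowg. Qed.

Lemma expn_pred_ltn g : (0 < g)%N -> (0 < q ^ g - q ^ g.-1)%N.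
Proof.
by move=> g0; rewrite subn_gt0 ltn_exp2l ?card_finNzRing_gt1 // prednK.
Qed.

Variable W : flag F n.
Local Notation H := (fsub W n.-1).

(* Each flag [Y] with [f1_at W g Y] is [flag_ins W g v] for exactly the
   [q ^ g - q ^ g.-1] vectors [v] of [Y_g] outside [W_{g-1}]. *)
Lemma card_ins_vectors g (P : pred (flag F n)) : (0 < g <= n)%N ->
  #|[set v : 'rV[F]_n | ~~ (v <= H)%MS & P (flag_ins W g v)]| =
  (#|[set Y | f1_at W g Y & P Y]| * (q ^ g - q ^ g.-1))%N.
Proof.
move=> g_n; rewrite -!sum1dep_card.
rewrite (partition_big (flag_ins W g) (fun Y => f1_at W g Y && P Y)) /=; last first.
  by move=> v /andP[vH Pv]; rewrite f1_at_ins.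
rewrite big_distrl /=; apply: eq_bigr => Y /andP[fY PY]; rewrite mul1n.
have sWY : (fsub W g.-1 <= fsub Y g)%MS.
  rewrite -(f1_at_low (k := g.-1) _ fY); [apply: fsubS | |]; lia.
have := card_rowgD sWY; rewrite !mxrank_fsub; try lia.
move=> <-; rewrite sum1dep_card; apply: eq_card => v.
rewrite !inE ?mem_rowg [in RHS]andbC -(flag_insP _ g_n fY).
by case: eqP => [->|]; rewrite ?PY ?andbT ?andbF.
Qed.

End VectorCounting.

Section OffHyperplane.
Variables (F : finFieldType) (n : nat) (W V : flag F n).
Hypothesis n_gt0 : (0 < n)%N.
Local Notation q := #|F|.
Local Notation H := (fsub W n.-1).

Definition offH k : {set 'rV[F]_n} := [set v | ~~ (v <= H)%MS & (v <= fsub V k)%MS].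

Lemma mxrankH : \rank H = n.-1.
Proof. by rewrite mxrank_fsub // leq_pred. Qed.

Lemma card_offH k : (k <= n)%N -> #|offH k| = (q ^ k - q ^ \rank (fsub V k :&: H))%N.
Proof.
move=> kn; rewrite -[X in (q ^ X)%N](mxrank_fsub V kn) -card_rowgD ?capmxSl //.
apply: eq_card => v; rewrite !inE ?mem_rowg sub_capmx.
by case: (v <= fsub V k)%MS; case: (v <= H)%MS.
Qed.

Lemma card_offH_sub k : (k <= n)%N -> (fsub V k <= H)%MS -> #|offH k| = 0%N.
Proof. by move=> kn sVH; rewrite card_offH // (capmx_idPl sVH) mxrank_fsub // subnn. Qed.

Lemma mxrank_capH k : (k <= n)%N -> ~~ (fsub V k <= H)%MS ->
  \rank (fsub V k :&: H)%MS = k.-1.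
Proof.
move=> kn nsVH; have rk_sum : \rank (fsub V k + H)%MS = n.
  apply/eqP; rewrite eqn_leq rank_leq_col addsmxC /=.
  by have := mxrank_ltn_adds nsVH; rewrite mxrankH; lia.
by have := mxrank_sum_cap (fsub V k) H; rewrite rk_sum mxrank_fsub // mxrankH; lia.
Qed.

Lemma card_offH_notsub k : (k <= n)%N -> ~~ (fsub V k <= H)%MS ->
  #|offH k| = (q ^ k - q ^ k.-1)%N.
Proof. by move=> kn nsVH; rewrite card_offH // mxrank_capH. Qed.

Lemma card_offH0 : #|offH 0| = 0%N.
Proof. by rewrite card_offH_sub // fsub0 sub0mx. Qed.

Lemma card_offHn : #|offH n| = (q ^ n - q ^ n.-1)%N.
Proof.
apply: card_offH_notsub => //; apply/negP => /mxrankS.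
by rewrite mxrank_fsub // mxrankH; lia.
Qed.

Lemma card_offH_level g : (0 < g <= n.-1)%N ->
  #|offH (level V (fsub W g))| = (q * #|offH (level V (fsub W g)).-1|)%N.
Proof.
move=> g_n; set k := level V (fsub W g).
have k0 : (0 < k)%N by apply: level_fsub_gt0; lia.
have kn : (k <= n)%N by apply: level_le.
(* If [V_{k-1} <= H] then also [V_k <= H]: otherwise [V_{k-1} = V_k :&: H]
   would contain [W_g], against the minimality of [k]. *)
have [sVH | nsVH] := boolP (fsub V k.-1 <= H)%MS.
  rewrite (card_offH_sub _ sVH) ?muln0; last lia.
  apply: card_offH_sub => //; apply/negPn/negP => nsVkH.
  have eq_cap : (fsub V k.-1 == fsub V k :&: H)%MS.
    apply: sub_rank_eqmx; first by rewrite sub_capmx sVH fsubS // leq_pred.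
    by rewrite mxrank_capH // mxrank_fsub //; lia.
  have sWcap : (fsub W g <= fsub V k :&: H)%MS.
    by rewrite sub_capmx sub_level fsubS //; lia.
  have := submx_trans sWcap (proj2 (andP eq_cap)).
  by rewrite sub_fsubE -/k; lia.
have nsVkH : ~~ (fsub V k <= H)%MS.
  by apply: contra nsVH => /(submx_trans _); apply; apply: fsubS; lia.
have k1 : (1 < k)%N.
  by case: k k0 nsVH {nsVkH kn} => [|[|k']] //= _; rewrite fsub0 sub0mx.
rewrite !card_offH_notsub //; last lia.
by case: k k1 {k0 kn nsVH nsVkH} => [|[|k']] // _ /=; rewrite mulnBr -!expnS.
Qed.

Lemma card_offH_levelD a b : (a <= b <= n)%N ->
  (#|[set v : 'rV[F]_n | ~~ (v <= H)%MS & (a < level V v <= b)%N]| + #|offH a|)%N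
  = #|offH b|.
Proof.
move=> /andP[ab bn].
rewrite -(cardsID [set v : 'rV[F]_n | (v <= fsub V a)%MS] (offH b)) addnC.
congr (_ + _)%N; apply: eq_card => v; rewrite !inE ?ltnNge.
all: rewrite (sub_fsubE _ _ bn) (sub_fsubE _ _ (leq_trans ab bn)).
all: have le_ab : (level V v <= a)%N -> (level V v <= b)%N := fun la => leq_trans la ab.
all: by case: (level V v <= a)%N le_ab; case: (level V v <= b)%N;
  case: (v <= H)%MS => // /(_ isT).
Qed.

End OffHyperplane.

Lemma big_nat_rev_sub (f : nat -> nat) n t : (t <= n)%N ->
  (\sum_((n - t).+1 <= g < n.+1) f (n - g) = \sum_(k < t) f k)%N.
Proof.
move=> tn; rewrite -{1}[(n - t).+1]add0n big_addn.
have -> : (n.+1 - (n - t).+1 = t)%N by lia.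
rewrite big_nat_rev -(big_mkord xpredT) /=.
by apply: eq_big_nat => i /andP[_ it]; congr f; lia.
Qed.

Lemma sum_ord_gt0 (f : nat -> nat) n :
  (\sum_(g < n.+1 | (0 < g)%N) f g = \sum_(1 <= g < n.+1) f g)%N.
Proof.
rewrite -(big_mkord (fun g => 0 < g)%N) big_ltn_cond //= big_nat_cond.
rewrite [RHS]big_nat_cond; apply: eq_bigl => i; rewrite andbT.
by rewrite andb_idr // => /andP[].
Qed.

Section LevelCounts.
Variables (F : finFieldType) (n : nat) (W V : flag F n) (t : nat).
Hypotheses (n_ge2 : (2 <= n)%N) (t_range : (1 <= t <= n - 1)%N).
Local Notation q := #|F|.
Local Notation H := (fsub W n.-1).
Local Notation m := (n - t)%N.
Local Notation Pw := (fun r => level V (fsub W r)).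

Let n_gt0 : (0 < n)%N. Proof. lia. Qed.

Lemma Xb_ins g v : (0 < g <= n)%N -> ~~ (v <= H)%MS ->
  Xb t (flag_ins W g v) V = strictly_incr m (ins_seq Pw g (level V v)).
Proof.
move=> g_n vH; rewrite XbE; apply: eq_strictly_incr => r rm.
rewrite fsub_ins //; last lia.
by rewrite /ins_seq; case: ifP => // _; rewrite level_genmx level_adds.
Qed.

Definition vecs_X g := [set v : 'rV[F]_n | ~~ (v <= H)%MS & Xb t (flag_ins W g v) V].
Definition flags_X g := [set Y | f1_at W g Y & Xb t Y V].

Lemma card_vecs_X g : (0 < g <= n)%N ->
  #|vecs_X g| = (#|flags_X g| * (q ^ g - q ^ g.-1))%N.
Proof. exact: card_ins_vectors (fun Y => Xb t Y V). Qed.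

Lemma level_vec_gt0 (v : 'rV[F]_n) : ~~ (v <= H)%MS -> (0 < level V v)%N.
Proof. by move=> vH; rewrite level_gt0; apply: contraNneq vH => ->; apply: sub0mx. Qed.

Lemma card_vecs_X_late g : (m < g <= n)%N ->
  #|vecs_X g| = if strictly_incr m Pw then #|offH W V n| else 0%N.
Proof.
move=> /andP[mg gn]; have g_n : (0 < g <= n)%N by lia.
case: ifP => incr.
  apply: eq_card => v; rewrite !inE; case vH: (v <= H)%MS => //=.
  rewrite (Xb_ins g_n (negbT vH)) strictly_incr_ins_seq_late // incr.
  by rewrite (submx_trans (submx1 v) (fsubn_full V)).
apply/eqP; rewrite cards_eq0; apply/eqP/setP => v; rewrite !inE.
case vH: (v <= H)%MS => //=.
by rewrite (Xb_ins g_n (negbT vH)) strictly_incr_ins_seq_late // incr.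
Qed.

Definition level_bound g := if (g < m)%N then (Pw g).-1 else n.

Lemma card_vecs_X_early g : (0 < g <= m)%N -> strictly_incr m.-1 Pw ->
  (#|vecs_X g| + #|offH W V (Pw g.-1)| = #|offH W V (level_bound g)|)%N.
Proof.
move=> g_m incr; have g_n : (0 < g <= n)%N by lia.
have Pg_gt0 : (0 < Pw g)%N by apply: level_fsub_gt0.
have ab : (Pw g.-1 <= level_bound g <= n)%N.
  rewrite /level_bound; have := level_le V (fsub W g); have := level_le V (fsub W g.-1).
  case: ifP => gm; last lia.
  suff : (Pw g.-1 < Pw g)%N by lia.
  case: g g_m gm {g_n} Pg_gt0 => [|[|g]] //= g_m gm; first by rewrite level_fsub0.
  by move=> _; apply: (strictly_incrP _ _ incr); lia.
rewrite -(card_offH_levelD W V ab); congr (_ + _)%N.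
apply: eq_card => v; rewrite !inE; case vH: (v <= H)%MS => //=.
have v_gt0 := level_vec_gt0 (negbT vH).
rewrite (Xb_ins g_n (negbT vH)).
rewrite (strictly_incr_ins_seq (N := n) (level_fsub_mono V W) (level_fsub0 V W) v_gt0 g_m)
  ?leq_subr // incr /level_bound /=.
case: ifP => gm /=; last by rewrite level_le !andbT.
by apply/andP/andP => -[lt1 lt2]; split; lia.
Qed.

Lemma card_vecs_X_early0 g : (0 < g <= m)%N -> ~~ strictly_incr m.-1 Pw ->
  #|vecs_X g| = 0%N.
Proof.
move=> g_m nincr; have g_n : (0 < g <= n)%N by lia.
apply/eqP; rewrite cards_eq0; apply/eqP/setP => v; rewrite !inE.
case vH: (v <= H)%MS => //=; have v_gt0 := level_vec_gt0 (negbT vH).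
rewrite (Xb_ins g_n (negbT vH)).
by rewrite (strictly_incr_ins_seq (N := n) (level_fsub_mono V W) (level_fsub0 V W) v_gt0 g_m)
  ?leq_subr // (negbTE nincr).
Qed.

(* From [j] to [j.+1] both sides are multiplied by [q] ([card_offH_level]) and
   increased by the vectors counted in [card_vecs_X_early]. *)
Lemma sum_card_flags_X j : strictly_incr m.-1 Pw -> (j <= m.-1)%N ->
  ((\sum_(1 <= g < j.+1) #|flags_X g|) * (q ^ j.+1 - q ^ j) = #|offH W V (Pw j)|)%N.
Proof.
move=> incr; elim: j => [|j IH] jm; first by rewrite big_geq // mul0n level_fsub0 card_offH0.
rewrite big_nat_recr //= mulnDl.
have -> : (q ^ j.+2 - q ^ j.+1 = q * (q ^ j.+1 - q ^ j))%N by rewrite mulnBr -!expnS.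
rewrite mulnCA IH; last lia.
have cardX := card_vecs_X (g := j.+1) ltac:(lia).
have cardXe := card_vecs_X_early (g := j.+1) ltac:(lia) incr.
rewrite /level_bound ifT /= in cardXe; last lia.
rewrite (card_offH_level W V n_gt0 (g := j.+1)); last lia.
by rewrite -cardXe mulnCA -cardX mulnDr addnC.
Qed.

Lemma sum_card_flags_X_early : strictly_incr m.-1 Pw ->
  (\sum_(1 <= g < m.+1) #|flags_X g| = q ^ t)%N.
Proof.
move=> incr; have m_gt0 : (0 < m)%N by lia.
apply/eqP; rewrite -(eqn_pmul2r (@expn_pred_ltn F m m_gt0)); apply/eqP.
rewrite big_nat_recr //= mulnDl.
have := sum_card_flags_X incr (leqnn m.-1); rewrite prednK // => ->.
rewrite -card_vecs_X; last lia.
have := card_vecs_X_early (g := m) ltac:(lia) incr; rewrite /level_bound ltnn addnC => ->.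
by rewrite (card_offHn W V n_gt0) mulnBr -!expnD; congr (q ^ _ - q ^ _)%N; lia.
Qed.

Lemma card_flags_X_late g : (m < g <= n)%N ->
  #|flags_X g| = if strictly_incr m Pw then (q ^ (n - g))%N else 0%N.
Proof.
move=> g_mn; have g_gt0 : (0 < g)%N by lia.
apply/eqP; rewrite -(eqn_pmul2r (@expn_pred_ltn F g g_gt0)); apply/eqP.
rewrite -card_vecs_X ?card_vecs_X_late //; try lia.
case: ifP => _; last by rewrite mul0n.
by rewrite (card_offHn W V n_gt0) mulnBr -!expnD; congr (q ^ _ - q ^ _)%N; lia.
Qed.

Lemma card_flags_X_early0 g : (0 < g <= m)%N -> ~~ strictly_incr m.-1 Pw ->
  #|flags_X g| = 0%N.
Proof.
move=> g_m nincr; have g_gt0 : (0 < g)%N by lia.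
apply/eqP; rewrite -(eqn_pmul2r (@expn_pred_ltn F g g_gt0)) mul0n.
by rewrite -card_vecs_X ?card_vecs_X_early0 //; lia.
Qed.

Lemma card_f1_X_sum : #|[set Y | f1b W Y & Xb t Y V]| = (\sum_(1 <= g < n.+1) #|flags_X g|)%N.
Proof.
rewrite -sum_ord_gt0.
rewrite -sum1dep_card; under [RHS]eq_bigr do rewrite -sum1dep_card.
rewrite (exchange_big_dep xpredT) //= [LHS]big_mkcond /=.
apply: eq_bigr => Y _; rewrite sum1dep_card f1bE.
case: (boolP (Xb t Y V)) => XY; last first.
  rewrite andbF; apply/esym/eqP; rewrite cards_eq0; apply/eqP/setP => g.
  by rewrite !inE !andbF.
rewrite !andbT; case: existsP => [[g0 /andP[g0_gt0 fY0]] | nf1].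
  rewrite (_ : [set _ | _] = [set g0]) ?cards1 //; apply/setP => g; rewrite !inE andbT.
  apply/andP/eqP => [[g_gt0 fY] | ->]; last by split.
  by apply/val_inj/(f1_at_unique _ _ fY fY0); rewrite -ltnS ltn_ord.
apply/esym/eqP; rewrite cards_eq0; apply/eqP/setP => g; rewrite !inE andbT.
by apply/negbTE/negP => /andP[g_gt0 fY]; apply: nf1; exists g; rewrite g_gt0.
Qed.

Lemma card_f1_X : #|[set Y | f1b W Y & Xb t Y V]| =
  (Xb t.+1 W V * q ^ t + Xb t W V * \sum_(k < t) q ^ k)%N.
Proof.
rewrite card_f1_X_sum (@big_cat_nat _ _ _ m.+1) //=; try lia.
rewrite !XbE subnS; congr (_ + _)%N.
  case: (boolP (strictly_incr m.-1 Pw)) => incr.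
    by rewrite mul1n sum_card_flags_X_early.
  rewrite mul0n big_nat_cond big1 // => g /andP[/andP[g_gt0 gm] _].
  by apply: card_flags_X_early0 => //; lia.
rewrite big_nat_cond (eq_bigr (fun g => strictly_incr m Pw * q ^ (n - g)))%N; last first.
  move=> g /andP[g_mn _]; rewrite card_flags_X_late //.
  by case: (strictly_incr m Pw); rewrite ?mul1n ?mul0n.
by rewrite -big_nat_cond -big_distrr /= big_nat_rev_sub //; lia.
Qed.

End LevelCounts.

Lemma hconv_ind (F : finFieldType) n (P Q : flag F n -> flag F n -> bool) W V :
  hconv (ind P) (ind Q) W V = #|[set Y | P W Y & Q Y V]|%:R.
Proof.
rewrite /hconv /ind -sum1dep_card natr_sum [RHS]big_mkcond /=.
by apply: eq_bigr => Y _; case: (P W Y); case: (Q Y V); rewrite ?mulr1 ?mulr0.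
Qed.

Theorem lemma3 (F : finFieldType) (n : nat) (hn : (2 <= n)%N) (t : nat)
  (ht : (1 <= t <= n - 1)%N) (W V : flag F n) :
  hconv (@f1 F n) (@ft F n t) W V =
    (\sum_(k < t) (#|F|%:R : algC) ^+ k) * ft t W V
    + (#|F|%:R : algC) ^+ t * ft t.+1 W V.
Proof.
have sum_powE : (\sum_(k < t) #|F| ^ k)%N%:R = \sum_(k < t) (#|F|%:R : algC) ^+ k.
  by rewrite natr_sum; apply: eq_bigr => k _; rewrite natrX.
rewrite hconv_ind card_f1_X // natrD !natrM natrX sum_powE addrC /ft /ind.
by congr (_ + _); rewrite mulrC; case: (Xb _ _ _).
Qed.
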